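(* Let $\rho_{ABC}\in\mathcal{S}(\mathcal{H}_{ABC})$, $\tau_{AC}\in\mathcal{S}(\mathcal{H}_{AC})$, $\theta_{BC}\in\mathcal{S}(\mathcal{H}_{BC})$, $\omega_C\in\mathcal{S}(\mathcal{H}_C)$, and suppose $\operatorname{supp}(\rho_{ABC})\subseteq\operatorname{supp}(\tau_{AC})\cap\operatorname{supp}(\theta_{BC})\cap\operatorname{supp}(\omega_C)$. Then for every ordered triple $(X,Y,Z)$ that is a permutation of $(\tau_{AC},\omega_C,\theta_{BC})$, $$\lim_{\alpha\to1}\Delta_\alpha(\rho_{ABC};X,Y,Z)=\Delta(\rho_{ABC},\tau_{AC},\theta_{BC},\omega_C).$$ In particular, $\lim_{\alpha\to1}\Delta_\alpha(\rho_{ABC};\rho_{AC},\rho_C,\rho_{BC})=I(A;B|C)_\rho$.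
   Context: Finite-dimensional Hilbert spaces; natural log; functions of positive semidefinite operators by spectral calculus, with logarithms and negative powers taken on the support only ($A^0$ denotes the projection onto the support). Operators on subsystems are tensored with identities; subscripts denote marginals. $\Delta(\rho_{ABC},\tau_{AC},\theta_{BC},\omega_C)\equiv\operatorname{Tr}\{\rho_{ABC}[\log\rho_{ABC}-\log\tau_{AC}-\log\theta_{BC}+\log\omega_C]\}$; $I(A;B|C)_\rho=H(AC)+H(BC)-H(C)-H(ABC)$. Set $e(\tau_{AC})=e(\theta_{BC})=+1$, $e(\omega_C)=-1$. For an ordered triple $(X,Y,Z)$ that is a permutation of $(\tau_{AC},\omega_C,\theta_{BC})$ and $p\in\mathbb{R}$, let $K_p(X,Y,Z)=X^{pe_X/2}Y^{pe_Y/2}Z^{pe_Z}Y^{pe_Y/2}X^{pe_X/2}$, and define $\Delta_\alpha(\rho_{ABC};X,Y,Z)\equiv\frac{1}{\alpha-1}\log\operatorname{Tr}\{\rho_{ABC}^{\alpha}K_{1-\alpha}(X,Y,Z)\}$. For example $\Delta_\alpha(\rho;\tau,\omega,\theta)=\frac{1}{\alpha-1}\log\operatorname{Tr}\{\rho^\alpha\tau^{(1-\alpha)/2}\omega^{(\alpha-1)/2}\theta^{1-\alpha}\omega^{(\alpha-1)/2}\tau^{(1-\alpha)/2}\}$. *)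

From Stdlib Require Import Reals Lra ClassicalEpsilon.
Open Scope R_scope.

Record Cplx := mkC { Re : R; Im : R }.
Definition C0 : Cplx := mkC 0 0.
Definition C1 : Cplx := mkC 1 0.
Definition RtoC (x : R) : Cplx := mkC x 0.
Definition Cadd (z w : Cplx) : Cplx := mkC (Re z + Re w) (Im z + Im w).
Definition Copp (z : Cplx) : Cplx := mkC (- Re z) (- Im z).
Definition Cmul (z w : Cplx) : Cplx :=
  mkC (Re z * Re w - Im z * Im w) (Re z * Im w + Im z * Re w).
Definition Cconj (z : Cplx) : Cplx := mkC (Re z) (- Im z).

Fixpoint csum (n : nat) (f : nat -> Cplx) : Cplx :=
  match n with
  | O => C0
  | S m => Cadd (csum m f) (f m)
  end.

(* ---------- matrices on C^n (only entries with indices < n matter) ---------- *)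
Definition Mat := nat -> nat -> Cplx.
Definition Vec := nat -> Cplx.

Definition madd (A B : Mat) : Mat := fun i j => Cadd (A i j) (B i j).
Definition mopp (A : Mat) : Mat := fun i j => Copp (A i j).
Definition mmul (n : nat) (A B : Mat) : Mat :=
  fun i j => csum n (fun k => Cmul (A i k) (B k j)).
Definition mvec (n : nat) (A : Mat) (v : Vec) : Vec :=
  fun i => csum n (fun k => Cmul (A i k) (v k)).
Definition madj (A : Mat) : Mat := fun i j => Cconj (A j i).
Definition mid : Mat := fun i j => if Nat.eqb i j then C1 else C0.
Definition trace (n : nat) (A : Mat) : Cplx := csum n (fun i => A i i).
Definition cinner (n : nat) (v w : Vec) : Cplx :=
  csum n (fun i => Cmul (Cconj (v i)) (w i)).

Definition PSD (n : nat) (A : Mat) : Prop :=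
  forall v : Vec, Im (cinner n v (mvec n A v)) = 0 /\ 0 <= Re (cinner n v (mvec n A v)).
Definition IsState (n : nat) (A : Mat) : Prop :=
  PSD n A /\ trace n A = C1.

Definition unitary (n : nat) (U : Mat) : Prop :=
  forall i j, (i < n)%nat -> (j < n)%nat -> mmul n (madj U) U i j = mid i j.
(* A = U diag(d) U^*  *)
Definition spec_decomp (n : nat) (A : Mat) (Ud : Mat * (nat -> R)) : Prop :=
  unitary n (fst Ud) /\
  forall i j, (i < n)%nat -> (j < n)%nat ->
    A i j = csum n (fun k => Cmul (Cmul (fst Ud i k) (RtoC (snd Ud k))) (Cconj (fst Ud j k))).

Definition inhab_Ud : inhabited (Mat * (nat -> R)) :=
  inhabits ((fun _ _ => C0), (fun _ => 0)).

(* a chosen spectral decomposition (exists for Hermitian, in particular PSD, A) *)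
Definition chosen_decomp (n : nat) (A : Mat) : Mat * (nat -> R) :=
  epsilon inhab_Ud (spec_decomp n A).

Definition mfun (f : R -> R) (n : nat) (A : Mat) : Mat :=
  let Ud := chosen_decomp n A in
  fun i j => csum n (fun k => Cmul (Cmul (fst Ud i k) (RtoC (f (snd Ud k)))) (Cconj (fst Ud j k))).

(* powers and logarithm taken on the support only; t = 0 gives the support projection *)
Definition rpow_supp (t : R) (x : R) : R :=
  if Rlt_dec 0 x then Rpower x t else 0.
Definition ln_supp (x : R) : R :=
  if Rlt_dec 0 x then ln x else 0.
Definition mpow (n : nat) (A : Mat) (t : R) : Mat := mfun (rpow_supp t) n A.
Definition mlog (n : nat) (A : Mat) : Mat := mfun ln_supp n A.

(* support inclusion: supp A ⊆ supp B (supports = ranges) *)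
Definition supp_sub (n : nat) (A B : Mat) : Prop :=
  forall v : Vec, exists w : Vec, forall i, (i < n)%nat -> mvec n A v i = mvec n B w i.

(* ---------- tripartite system H_A ⊗ H_B ⊗ H_C, index (a,b,c) ↦ (a*dB+b)*dC+c ---------- *)
Definition ixA (dA dB dC : nat) (i : nat) : nat := Nat.div i (dB * dC).
Definition ixB (dA dB dC : nat) (i : nat) : nat := Nat.modulo (Nat.div i dC) dB.
Definition ixC (dA dB dC : nat) (i : nat) : nat := Nat.modulo i dC.
Definition ixAC (dA dB dC : nat) (i : nat) : nat := (ixA dA dB dC) i * dC + (ixC dA dB dC) i.
Definition ixBC (dA dB dC : nat) (i : nat) : nat := (ixB dA dB dC) i * dC + (ixC dA dB dC) i.
Definition delta (a b : nat) : Cplx := if Nat.eqb a b then C1 else C0.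

(* X_AC ⊗ 1_B,  1_A ⊗ X_BC,  1_AB ⊗ X_C as operators on ABC *)
Definition extAC (dA dB dC : nat) (X : Mat) : Mat :=
  fun i j => Cmul (X ((ixAC dA dB dC) i) ((ixAC dA dB dC) j)) (delta ((ixB dA dB dC) i) ((ixB dA dB dC) j)).
Definition extBC (dA dB dC : nat) (X : Mat) : Mat :=
  fun i j => Cmul (X ((ixBC dA dB dC) i) ((ixBC dA dB dC) j)) (delta ((ixA dA dB dC) i) ((ixA dA dB dC) j)).
Definition extC (dA dB dC : nat) (X : Mat) : Mat :=
  fun i j => Cmul (X ((ixC dA dB dC) i) ((ixC dA dB dC) j)) (Cmul (delta ((ixA dA dB dC) i) ((ixA dA dB dC) j)) (delta ((ixB dA dB dC) i) ((ixB dA dB dC) j))).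

Definition idx3 (dA dB dC : nat) (a b c : nat) : nat := (a * dB + b) * dC + c.

Definition margAC (dA dB dC : nat) (rho : Mat) : Mat :=
  fun x y => csum dB (fun b =>
    rho ((idx3 dA dB dC) (Nat.div x dC) b (Nat.modulo x dC)) ((idx3 dA dB dC) (Nat.div y dC) b (Nat.modulo y dC))).
Definition margBC (dA dB dC : nat) (rho : Mat) : Mat :=
  fun x y => csum dA (fun a =>
    rho ((idx3 dA dB dC) a (Nat.div x dC) (Nat.modulo x dC)) ((idx3 dA dB dC) a (Nat.div y dC) (Nat.modulo y dC))).
Definition margC (dA dB dC : nat) (rho : Mat) : Mat :=
  fun x y => csum dA (fun a => csum dB (fun b => rho ((idx3 dA dB dC) a b x) ((idx3 dA dB dC) a b y))).

Definition NABC (dA dB dC : nat) := (dA * dB * dC)%nat.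

Definition DeltaQ (dA dB dC : nat) (rho tau theta omega : Mat) : R :=
  Re (trace (NABC dA dB dC) (mmul (NABC dA dB dC) rho
        (madd (madd (madd (mlog (NABC dA dB dC) rho) (mopp ((extAC dA dB dC) (mlog (dA * dC) tau))))
                    (mopp ((extBC dA dB dC) (mlog (dB * dC) theta))))
              ((extC dA dB dC) (mlog dC omega))))).

Inductive slot := sTau | sOmega | sTheta.
Definition esign (s : slot) : R :=
  match s with sTau => 1 | sTheta => 1 | sOmega => -1 end.

Definition slotPow (dA dB dC : nat) (tau theta omega : Mat) (s : slot) (t : R) : Mat :=
  match s with
  | sTau => (extAC dA dB dC) (mpow (dA * dC) tau t)
  | sTheta => (extBC dA dB dC) (mpow (dB * dC) theta t)
  | sOmega => (extC dA dB dC) (mpow dC omega t)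
  end.

Definition Kp (dA dB dC : nat) (tau theta omega : Mat) (X Y Z : slot) (p : R) : Mat :=
  let P := (slotPow dA dB dC) tau theta omega in
  mmul (NABC dA dB dC) (P X (p * esign X / 2))
   (mmul (NABC dA dB dC) (P Y (p * esign Y / 2))
    (mmul (NABC dA dB dC) (P Z (p * esign Z))
     (mmul (NABC dA dB dC) (P Y (p * esign Y / 2)) (P X (p * esign X / 2))))).

Definition DeltaQ_alpha (dA dB dC : nat) (rho tau theta omega : Mat) (X Y Z : slot) (alpha : R) : R :=
  / (alpha - 1) *
  ln (Re (trace (NABC dA dB dC) (mmul (NABC dA dB dC) (mpow (NABC dA dB dC) rho alpha) ((Kp dA dB dC) tau theta omega X Y Z (1 - alpha))))).

Definition entropy (n : nat) (s : Mat) : R := - Re (trace n (mmul n s (mlog n s))).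
Definition CMI (dA dB dC : nat) (rho : Mat) : R :=
  entropy (dA * dC) ((margAC dA dB dC) rho) + entropy (dB * dC) ((margBC dA dB dC) rho)
  - entropy dC ((margC dA dB dC) rho) - entropy (NABC dA dB dC) rho.

From Pilot Require Import Defs.
From Stdlib Require Import Reals Lra Lia ClassicalEpsilon FunctionalExtensionality.
From mathcomp Require all_boot all_algebra complex Rstruct.

(** Write [F(α) = Tr ρ^α K_{1-α}(X,Y,Z)], so that [Δ_α = ln F(α) / (α - 1)].
    Since the support projections of τ, θ and ω all fix ρ on both sides,
    [F(1) = Tr ρ = 1], hence [Δ_α → F'(1)].  Differentiating the product
    [ρ^α X^{…} Y^{…} Z^{…} Y^{…} X^{…}] factor by factor and absorbing the
    remaining support projections into ρ, every term collapses to a single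
    [Tr ρ log ρ] or [Tr ρ log S], and the signs [e_S] reassemble [Δ].
    For the marginals, [ρ] is supported in [ρ_AC ⊗ 1_B] etc., and the trace of
    [ρ (log ρ_AC ⊗ 1_B)] is the trace of [ρ_AC log ρ_AC], so that [Δ] becomes
    the conditional mutual information. *)

Open Scope R_scope.

Lemma Cplx_eq (z w : Cplx) : Re z = Re w -> Im z = Im w -> z = w.
Proof. destruct z, w; simpl; intros; subst; reflexivity. Qed.
Ltac ceq := apply Cplx_eq; simpl; ring.

Lemma Cmul_comm z w : Cmul z w = Cmul w z. Proof. ceq. Qed.
Lemma Cmul_assoc z w u : Cmul (Cmul z w) u = Cmul z (Cmul w u). Proof. ceq. Qed.
Lemma Cmul_addl z w u : Cmul (Cadd z w) u = Cadd (Cmul z u) (Cmul w u). Proof. ceq. Qed.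
Lemma Cmul_addr z w u : Cmul u (Cadd z w) = Cadd (Cmul u z) (Cmul u w). Proof. ceq. Qed.
Lemma Cconj_mul z w : Cconj (Cmul z w) = Cmul (Cconj z) (Cconj w). Proof. ceq. Qed.
Lemma Cconj_add z w : Cconj (Cadd z w) = Cadd (Cconj z) (Cconj w). Proof. ceq. Qed.
Lemma Cconj_invol z : Cconj (Cconj z) = z. Proof. ceq. Qed.
Lemma Cconj_RtoC x : Cconj (RtoC x) = RtoC x. Proof. ceq. Qed.
Lemma RtoC_mul x y : RtoC (x * y) = Cmul (RtoC x) (RtoC y). Proof. ceq. Qed.

Lemma delta_eq a b : a = b -> delta a b = Defs.C1.
Proof. intros ->; unfold delta; rewrite Nat.eqb_refl; reflexivity. Qed.
Lemma delta_neq a b : a <> b -> delta a b = C0.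
Proof. intros H; unfold delta; apply Nat.eqb_neq in H; rewrite H; reflexivity. Qed.
Lemma delta_sym a b : delta a b = delta b a.
Proof. unfold delta; rewrite Nat.eqb_sym; reflexivity. Qed.
Lemma Cconj_delta a b : Cconj (delta a b) = delta a b.
Proof. unfold delta; destruct (Nat.eqb a b); ceq. Qed.

Lemma csum_ext n f g : (forall k, (k < n)%nat -> f k = g k) -> csum n f = csum n g.
Proof.
  induction n; intros H; simpl; [reflexivity|].
  rewrite IHn by (intros; apply H; lia). rewrite H by lia. reflexivity.
Qed.
Lemma csum_add n f g : csum n (fun k => Cadd (f k) (g k)) = Cadd (csum n f) (csum n g).
Proof. induction n; simpl; [ceq|]. rewrite IHn. ceq. Qed.
Lemma csum_mull n c f : csum n (fun k => Cmul c (f k)) = Cmul c (csum n f).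
Proof. induction n; simpl; [ceq|]. rewrite IHn, Cmul_addr. reflexivity. Qed.
Lemma csum_mulr n c f : csum n (fun k => Cmul (f k) c) = Cmul (csum n f) c.
Proof. induction n; simpl; [ceq|]. rewrite IHn, Cmul_addl. reflexivity. Qed.
Lemma csum_zero n : csum n (fun _ => C0) = C0.
Proof. induction n; simpl; [reflexivity|]. rewrite IHn; ceq. Qed.
Lemma csum_swap n m (f : nat -> nat -> Cplx) :
  csum n (fun i => csum m (fun j => f i j)) = csum m (fun j => csum n (fun i => f i j)).
Proof.
  induction n; simpl.
  - rewrite csum_zero; reflexivity.
  - rewrite IHn, <- csum_add. reflexivity.
Qed.
Lemma csum_conj n f : Cconj (csum n f) = csum n (fun k => Cconj (f k)).
Proof. induction n; simpl; [ceq|]. rewrite Cconj_add, IHn. reflexivity. Qed.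

Lemma csum_delta_l n i f : (i < n)%nat -> csum n (fun k => Cmul (delta i k) (f k)) = f i.
Proof.
  induction n; intros Hi; [lia|]. simpl.
  destruct (Nat.eq_dec i n) as [->|Hne].
  - rewrite (csum_ext _ _ (fun _ => C0)).
    + rewrite csum_zero, delta_eq by reflexivity. ceq.
    + intros k Hk. rewrite delta_neq by lia. ceq.
  - rewrite IHn, delta_neq by lia. ceq.
Qed.
Lemma csum_delta_r n i f : (i < n)%nat -> csum n (fun k => Cmul (f k) (delta k i)) = f i.
Proof.
  intros Hi. rewrite <- (csum_delta_l n i f Hi). apply csum_ext; intros.
  rewrite delta_sym, Cmul_comm; reflexivity.
Qed.

Lemma csum_Re_nonneg n f :
  (forall k, (k < n)%nat -> 0 <= Re (f k)) -> 0 <= Re (csum n f).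
Proof.
  induction n; intros H; simpl; [lra|].
  assert (0 <= Re (f n)) by (apply H; lia). assert (0 <= Re (csum n f)) by (apply IHn; auto). lra.
Qed.
Lemma csum_Im_eq0 n f : (forall k, (k < n)%nat -> Im (f k) = 0) -> Im (csum n f) = 0.
Proof.
  induction n; intros H; simpl; [lra|].
  rewrite IHn, H by (intros; try apply H; lia). lra.
Qed.
Lemma csum_nonneg_eq0 n f :
  (forall k, (k < n)%nat -> 0 <= Re (f k)) -> Re (csum n f) = 0 ->
  forall k, (k < n)%nat -> Re (f k) = 0.
Proof.
  induction n; intros H H0 k Hk; [lia|]. simpl in H0.
  assert (0 <= Re (csum n f)) by (apply csum_Re_nonneg; auto).
  assert (0 <= Re (f n)) by (apply H; lia).
  destruct (Nat.eq_dec k n); [subst; lra|].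
  apply IHn; try lra; try lia. intros; apply H; lia.
Qed.

Definition meq (n : nat) (A B : Mat) : Prop :=
  forall i j, (i < n)%nat -> (j < n)%nat -> A i j = B i j.
Definition mscale (c : Cplx) (A : Mat) : Mat := fun i j => Cmul c (A i j).
Definition mzero : Mat := fun _ _ => C0.

Lemma meq_refl n A : meq n A A. Proof. intros i j _ _; reflexivity. Qed.
Lemma meq_sym n A B : meq n A B -> meq n B A. Proof. intros H i j Hi Hj; symmetry; auto. Qed.
Lemma meq_trans n A B C : meq n A B -> meq n B C -> meq n A C.
Proof. intros H1 H2 i j Hi Hj; rewrite H1 by auto; auto. Qed.

Lemma mmul_meq n A A' B B' : meq n A A' -> meq n B B' -> meq n (mmul n A B) (mmul n A' B').
Proof. intros H1 H2 i j Hi Hj; unfold mmul; apply csum_ext; intros; rewrite H1, H2 by auto; reflexivity. Qed.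
Lemma mmul_meq_l n A A' B : meq n A A' -> meq n (mmul n A B) (mmul n A' B).
Proof. intros; apply mmul_meq; auto using meq_refl. Qed.
Lemma mmul_meq_r n A B B' : meq n B B' -> meq n (mmul n A B) (mmul n A B').
Proof. intros; apply mmul_meq; auto using meq_refl. Qed.
Lemma trace_meq n A B : meq n A B -> trace n A = trace n B.
Proof. intros H; unfold trace; apply csum_ext; intros; auto. Qed.
Lemma madj_meq n A B : meq n A B -> meq n (madj A) (madj B).
Proof. intros H i j Hi Hj; unfold madj; rewrite H; auto. Qed.

Lemma mmul_assoc n A B C : mmul n (mmul n A B) C = mmul n A (mmul n B C).
Proof.
  extensionality i; extensionality j; unfold mmul.
  transitivity (csum n (fun k => csum n (fun l => Cmul (A i l) (Cmul (B l k) (C k j))))).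
  - apply csum_ext; intros. rewrite <- csum_mulr. apply csum_ext; intros. apply Cmul_assoc.
  - rewrite csum_swap. apply csum_ext; intros. rewrite <- csum_mull. reflexivity.
Qed.
Lemma mmul_addr n A B C : mmul n A (madd B C) = madd (mmul n A B) (mmul n A C).
Proof.
  extensionality i; extensionality j; unfold mmul, madd.
  rewrite <- csum_add. apply csum_ext; intros. apply Cmul_addr.
Qed.
Lemma mmul_addl n A B C : mmul n (madd A B) C = madd (mmul n A C) (mmul n B C).
Proof.
  extensionality i; extensionality j; unfold mmul, madd.
  rewrite <- csum_add. apply csum_ext; intros. apply Cmul_addl.
Qed.
Lemma mmul_oppr n A B : mmul n A (mopp B) = mopp (mmul n A B).
Proof. extensionality i; extensionality j; unfold mmul, mopp. induction n; simpl; [ceq|]. rewrite IHn. ceq. Qed.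
Lemma mmul_oppl n A B : mmul n (mopp A) B = mopp (mmul n A B).
Proof. extensionality i; extensionality j; unfold mmul, mopp. induction n; simpl; [ceq|]. rewrite IHn. ceq. Qed.
Lemma mmul_scaler n c A B : mmul n A (mscale c B) = mscale c (mmul n A B).
Proof.
  extensionality i; extensionality j; unfold mmul, mscale.
  rewrite <- csum_mull. apply csum_ext; intros. ceq.
Qed.
Lemma mmul_mid_l n A : meq n (mmul n mid A) A.
Proof.
  intros i j Hi Hj; unfold mmul. rewrite <- (csum_delta_l n i (fun k => A k j)) by auto.
  apply csum_ext; intros. reflexivity.
Qed.
Lemma mmul_mid_r n A : meq n (mmul n A mid) A.
Proof.
  intros i j Hi Hj; unfold mmul. rewrite <- (csum_delta_r n j (A i)) by auto.
  apply csum_ext; intros. reflexivity.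
Qed.

Lemma trace_add n A B : trace n (madd A B) = Cadd (trace n A) (trace n B).
Proof. apply csum_add. Qed.
Lemma trace_opp n A : trace n (mopp A) = Copp (trace n A).
Proof. unfold trace, mopp. induction n; simpl; [ceq|]. rewrite IHn. ceq. Qed.
Lemma trace_scale n c A : trace n (mscale c A) = Cmul c (trace n A).
Proof. apply csum_mull. Qed.
Lemma trace_cyc n A B : trace n (mmul n A B) = trace n (mmul n B A).
Proof.
  unfold trace, mmul. rewrite csum_swap.
  apply csum_ext; intros. apply csum_ext; intros. apply Cmul_comm.
Qed.

Lemma madj_mmul n A B : madj (mmul n A B) = mmul n (madj B) (madj A).
Proof.
  extensionality i; extensionality j; unfold madj, mmul. rewrite csum_conj.
  apply csum_ext; intros. rewrite Cconj_mul, Cmul_comm; reflexivity.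
Qed.

Lemma mvec_mmul n A B v : mvec n (mmul n A B) v = mvec n A (mvec n B v).
Proof.
  extensionality i. unfold mvec, mmul.
  rewrite (csum_ext n _ (fun k => csum n (fun l => Cmul (A i l) (Cmul (B l k) (v k))))).
  - rewrite csum_swap. apply csum_ext; intros. rewrite csum_mull. reflexivity.
  - intros. rewrite <- csum_mulr. apply csum_ext; intros. apply Cmul_assoc.
Qed.
Lemma mvec_meq n A B v i : meq n A B -> (i < n)%nat -> mvec n A v i = mvec n B v i.
Proof. intros H Hi. unfold mvec. apply csum_ext; intros. rewrite H; auto. Qed.

Lemma supp_sub_meq n rho A B : meq n A B -> supp_sub n rho A -> supp_sub n rho B.
Proof.
  intros H S v. destruct (S v) as [w Hw]. exists w.
  intros i Hi. rewrite Hw by auto. apply mvec_meq; auto.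
Qed.

Lemma trace_adj_mul_eq0 n B : Re (trace n (mmul n (madj B) B)) = 0 -> meq n B mzero.
Proof.
  intros H i j Hi Hj. unfold trace, mmul, madj in H.
  assert (Hsq : forall a k, 0 <= Re (Cmul (Cconj (B k a)) (B k a))) by (intros; simpl; nra).
  assert (Hj0 := csum_nonneg_eq0 n _ (fun a _ => csum_Re_nonneg n _ (fun k _ => Hsq a k)) H j Hj).
  assert (Hi0 := csum_nonneg_eq0 n _ (fun k _ => Hsq j k) Hj0 i Hi).
  simpl in Hi0. unfold mzero. destruct (B i j) as [x y]. simpl in Hi0. apply Cplx_eq; simpl; nra.
Qed.

Definition vec2 (a b : Cplx) (i j : nat) : Vec :=
  fun k => Cadd (Cmul a (delta i k)) (Cmul b (delta j k)).

Lemma quad_vec2 n A a b i j : (i < n)%nat -> (j < n)%nat ->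
  cinner n (vec2 a b i j) (mvec n A (vec2 a b i j)) =
  Cadd (Cmul (Cconj a) (Cadd (Cmul (A i i) a) (Cmul (A i j) b)))
       (Cmul (Cconj b) (Cadd (Cmul (A j i) a) (Cmul (A j j) b))).
Proof.
  intros Hi Hj. unfold cinner, mvec, vec2.
  assert (Hrow : forall x, csum n (fun k => Cmul (A x k) (Cadd (Cmul a (delta i k)) (Cmul b (delta j k))))
                 = Cadd (Cmul (A x i) a) (Cmul (A x j) b)).
  { intros x.
    rewrite (csum_ext n _ (fun k => Cadd (Cmul (delta i k) (Cmul (A x k) a)) (Cmul (delta j k) (Cmul (A x k) b))))
      by (intros; ceq).
    rewrite csum_add, (csum_delta_l n i (fun k => Cmul (A x k) a)), (csum_delta_l n j (fun k => Cmul (A x k) b)) by auto.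
    reflexivity. }
  set (r x := Cadd (Cmul (A x i) a) (Cmul (A x j) b)).
  rewrite (csum_ext n _ (fun x => Cadd (Cmul (delta i x) (Cmul (Cconj a) (r x))) (Cmul (delta j x) (Cmul (Cconj b) (r x))))).
  - rewrite csum_add, (csum_delta_l n i (fun x => Cmul (Cconj a) (r x))), (csum_delta_l n j (fun x => Cmul (Cconj b) (r x))) by auto.
    reflexivity.
  - intros x _. rewrite Hrow. unfold r. rewrite Cconj_add, !Cconj_mul, !Cconj_delta. ceq.
Qed.

(* Polarization with the four test vectors [e_i], [e_j], [e_i + e_j], [e_i + i e_j]. *)
Lemma PSD_hermitian n A : PSD n A -> forall i j, (i < n)%nat -> (j < n)%nat -> A j i = Cconj (A i j).
Proof.
  intros H i j Hi Hj.
  destruct (H (vec2 Defs.C1 C0 i j)) as [H1 _]. rewrite quad_vec2 in H1 by auto.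
  destruct (H (vec2 C0 Defs.C1 i j)) as [H2 _]. rewrite quad_vec2 in H2 by auto.
  destruct (H (vec2 Defs.C1 Defs.C1 i j)) as [H3 _]. rewrite quad_vec2 in H3 by auto.
  destruct (H (vec2 Defs.C1 (mkC 0 1) i j)) as [H4 _]. rewrite quad_vec2 in H4 by auto.
  simpl in *. destruct (A i i), (A i j), (A j i), (A j j). simpl in *.
  apply Cplx_eq; simpl; lra.
Qed.

Lemma madj_PSD n A : PSD n A -> meq n (madj A) A.
Proof. intros H i j Hi Hj. unfold madj. rewrite (PSD_hermitian n A H i j) by auto. apply Cconj_invol. Qed.

(* mathcomp's spectral theorem, transported along [Cplx ≅ R[i]]. *)
Module SpectralTheorem.
Import all_boot all_algebra complex Rstruct.
Import GRing.Theory Num.Theory.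
Local Open Scope ring_scope.
Local Open Scope sesquilinear_scope.

Definition toC (z : Cplx) : R[i] := Complex (Defs.Re z) (Defs.Im z).
Definition ofC (x : R[i]) : Cplx := mkC (complex.Re x) (complex.Im x).
Lemma ofCK x : toC (ofC x) = x. Proof. by case: x. Qed.
Lemma toC_inj z w : toC z = toC w -> z = w.
Proof. by case: z; case: w => ? ? ? ? [-> ->]. Qed.
Lemma toC_mul z w : toC (Cmul z w) = toC z * toC w. Proof. by []. Qed.
Lemma toC_conj z : toC (Cconj z) = Num.conj (toC z). Proof. by []. Qed.
Lemma toC_csum n f : toC (csum n f) = \sum_(k < n) toC (f k).
Proof. by elim: n => [|n IH]; rewrite ?big_ord0 // big_ord_recr /= -IH. Qed.

Lemma toC_mid n i j : (i < n.+1)%coq_nat -> (j < n.+1)%coq_nat ->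
  toC (mid i j) = (1%:M : 'M[R[i]]_n.+1) (inord i) (inord j).
Proof.
  move=> /ltP Hi /ltP Hj; rewrite mxE /mid.
  case: (PeanoNat.Nat.eqb_spec i j) => [->|Hne]; first by rewrite eqxx.
  by case: eqP => // /(congr1 val) /=; rewrite !inordK.
Qed.

Lemma hermitian_spec_decomp n (A : Mat) :
  (forall i j, (i < n)%coq_nat -> (j < n)%coq_nat -> A j i = Cconj (A i j)) ->
  exists Ud, spec_decomp n A Ud.
Proof.
  case: n => [|n] Ah.
    by exists ((fun _ _ => Defs.C0), (fun _ => 0%R)); split => i j Hi; inversion Hi.
  pose M : 'M[R[i]]_n.+1 := \matrix_(i, j) toC (A i j).
  have M_entry i j : (i < n.+1)%coq_nat -> (j < n.+1)%coq_nat -> toC (A i j) = M (inord i) (inord j).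
    by move=> /ltP Hi /ltP Hj; rewrite mxE !inordK.
  have Mh : M ^t Num.conj = M.
    by apply/matrixP => i j; rewrite !mxE -toC_conj -Ah //; apply/ltP.
  have Mherm : M \is hermsymmx by rewrite sesquilinear.is_hermitianmxE expr0 scale1r Mh.
  have /spectral.orthomx_spectralP : M \is spectral.normalmx by rewrite qualifE /= Mh eqxx.
  set P := spectral.spectralmx M; set sp := spectral.spectral_diag M => MP.
  have Pu : P \is spectral.unitarymx := spectral.spectral_unitarymx M.
  rewrite spectral.invmx_unitary // in MP.
  have sp_real k : complex.Im (sp 0 k) = 0.
    have /mxOverP/(_ 0 k)/Creal_ImP HI := spectral.hermitian_spectral_diag_real Mherm.
    by have := complexIm (sp 0 k); rewrite HI => /(congr1 (@complex.Re _)).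
  pose U : Mat := fun i k => ofC ((P ^t Num.conj) (inord i) (inord k)).
  exists (U, fun k => complex.Re (sp 0 (inord k))); split => i j Hi Hj; apply: toC_inj.
  - rewrite (toC_mid n) // toC_csum; move/spectral.unitarymxP: Pu => <-.
    rewrite mxE; apply: eq_bigr => k _.
    by rewrite toC_mul toC_conj /U !ofCK !mxE /= conjCK (inord_val k) mulrC.
  - rewrite toC_csum M_entry // MP mxE; apply: eq_bigr => k _.
    rewrite !toC_mul toC_conj /U !ofCK mul_mx_diag !mxE conjCK !inord_val.
    congr (_ * _ * _); move: (sp_real k).
    by rewrite /RtoC /toC /= inord_val; case: (sp 0 k) => a b /= ->.
Qed.
End SpectralTheorem.

Lemma chosen_decompP n A : PSD n A -> spec_decomp n A (chosen_decomp n A).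
Proof.
  intros H. unfold chosen_decomp. apply epsilon_spec, SpectralTheorem.hermitian_spec_decomp.
  intros; apply (PSD_hermitian n); auto.
Qed.

Definition eigvecs (n : nat) (A : Mat) : Mat := fst (chosen_decomp n A).
Definition eigvals (n : nat) (A : Mat) : nat -> R := snd (chosen_decomp n A).
Definition diagf (f : R -> R) (d : nat -> R) : Mat :=
  fun i j => Cmul (delta i j) (RtoC (f (d i))).

Lemma mfun_diag f n A :
  mfun f n A = mmul n (mmul n (eigvecs n A) (diagf f (eigvals n A))) (madj (eigvecs n A)).
Proof.
  extensionality i; extensionality j. unfold mfun, mmul. fold (eigvecs n A) (eigvals n A).
  apply csum_ext; intros k Hk. f_equal.
  set (c l := Cmul (eigvecs n A i l) (RtoC (f (eigvals n A l)))).
  rewrite (csum_ext n _ (fun l => Cmul (c l) (delta l k))) by (intros; unfold c; ceq).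
  rewrite (csum_delta_r n k c) by auto. reflexivity.
Qed.

Lemma eigvecs_unitary n A : PSD n A -> meq n (mmul n (madj (eigvecs n A)) (eigvecs n A)) mid.
Proof. intros H. apply (chosen_decompP n A H). Qed.

Lemma mfun_id n A : PSD n A -> meq n A (mfun (fun x => x) n A).
Proof. intros H i j Hi Hj. apply (chosen_decompP n A H); auto. Qed.

Lemma diagf_mul n f g d : meq n (mmul n (diagf f d) (diagf g d)) (diagf (fun x => f x * g x) d).
Proof.
  intros i j Hi Hj. unfold mmul, diagf.
  rewrite (csum_ext n _ (fun k => Cmul (delta i k) (Cmul (RtoC (f (d i))) (Cmul (delta k j) (RtoC (g (d k)))))))
    by (intros; ceq).
  rewrite (csum_delta_l n i (fun k => Cmul (RtoC (f (d i))) (Cmul (delta k j) (RtoC (g (d k)))))) by auto.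
  rewrite RtoC_mul. ceq.
Qed.

Lemma mfun_mul n A f g : PSD n A ->
  meq n (mmul n (mfun f n A) (mfun g n A)) (mfun (fun x => f x * g x) n A).
Proof.
  intros H. rewrite !mfun_diag. set (U := eigvecs n A). set (d := eigvals n A).
  rewrite !mmul_assoc, <- (mmul_assoc n (madj U) U).
  apply mmul_meq_r.
  eapply meq_trans; [apply mmul_meq_r, mmul_meq_l, eigvecs_unitary; auto|].
  eapply meq_trans; [apply mmul_meq_r, mmul_mid_l|].
  rewrite <- mmul_assoc. apply mmul_meq_l, diagf_mul.
Qed.

Lemma eigvals_nonneg n A : PSD n A -> forall k, (k < n)%nat -> 0 <= eigvals n A k.
Proof.
  intros H k Hk. set (U := eigvecs n A).
  destruct (H (fun i => U i k)) as [_ Hq].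
  change (0 <= Re (mmul n (madj U) (mmul n A U) k k)) in Hq.
  assert (Hdiag : meq n (mmul n (madj U) (mmul n A U)) (diagf (fun x => x) (eigvals n A))).
  { eapply meq_trans; [apply mmul_meq_r, mmul_meq_l, mfun_id; auto|].
    rewrite mfun_diag. fold U. rewrite !mmul_assoc, <- (mmul_assoc n (madj U) U).
    eapply meq_trans; [apply mmul_meq_l, eigvecs_unitary; auto|].
    eapply meq_trans; [apply mmul_mid_l|].
    eapply meq_trans; [apply mmul_meq_r, eigvecs_unitary; auto|].
    apply mmul_mid_r. }
  rewrite Hdiag in Hq by auto. unfold diagf in Hq. rewrite delta_eq in Hq by reflexivity.
  simpl in Hq. lra.
Qed.

Lemma mfun_ext_nonneg n A f g : PSD n A -> (forall x, 0 <= x -> f x = g x) ->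
  mfun f n A = mfun g n A.
Proof.
  intros HA H. extensionality i; extensionality j. unfold mfun. fold (eigvals n A).
  apply csum_ext; intros k Hk. rewrite H; auto using eigvals_nonneg.
Qed.

Lemma mfun_eq_self n A f : PSD n A -> (forall x, 0 <= x -> f x = x) -> meq n (mfun f n A) A.
Proof. intros HA H. rewrite (mfun_ext_nonneg n A f (fun x => x)) by auto. apply meq_sym, mfun_id, HA. Qed.

Lemma madj_mfun f n A : madj (mfun f n A) = mfun f n A.
Proof.
  extensionality i; extensionality j. unfold madj, mfun. rewrite csum_conj.
  apply csum_ext; intros. rewrite !Cconj_mul, Cconj_invol, Cconj_RtoC. ceq.
Qed.

Lemma rpow_supp_0_mul x : 0 <= x -> x * rpow_supp 0 x = x.
Proof. intros Hx. unfold rpow_supp. destruct (Rlt_dec 0 x); [rewrite Rpower_O by lra|]; lra. Qed.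

Lemma mpow_1 n A : PSD n A -> meq n (mpow n A 1) A.
Proof.
  intros HA. apply mfun_eq_self; auto. intros x Hx. unfold rpow_supp.
  destruct (Rlt_dec 0 x); [apply Rpower_1|]; lra.
Qed.

Lemma mpow_0_fix_l n A : PSD n A -> meq n (mmul n (mpow n A 0) A) A.
Proof.
  intros HA. eapply meq_trans; [apply mmul_meq_r, mfun_id; auto|].
  eapply meq_trans; [apply mfun_mul; auto|].
  apply mfun_eq_self; auto. intros x Hx. rewrite Rmult_comm. apply rpow_supp_0_mul; auto.
Qed.

Lemma mpow_0_fix_r n A : PSD n A -> meq n (mmul n A (mpow n A 0)) A.
Proof.
  intros HA. eapply meq_trans; [apply mmul_meq_l, mfun_id; auto|].
  eapply meq_trans; [apply mfun_mul; auto|].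
  apply mfun_eq_self; auto using rpow_supp_0_mul.
Qed.

Definition inv_supp (x : R) : R := if Rlt_dec 0 x then / x else 0.

Lemma rpow_supp_0_idem x : rpow_supp 0 x * rpow_supp 0 x = rpow_supp 0 x.
Proof. unfold rpow_supp. destruct (Rlt_dec 0 x); [rewrite Rpower_O by auto|]; ring. Qed.

Lemma rpow_supp_half_sq x : 0 <= x -> rpow_supp (1/2) x * rpow_supp (1/2) x = x.
Proof.
  intros Hx. unfold rpow_supp. destruct (Rlt_dec 0 x); [|lra].
  rewrite <- Rpower_plus. replace (1/2 + 1/2) with 1 by field. apply Rpower_1; auto.
Qed.

Lemma mul_inv_supp x : x * inv_supp x = rpow_supp 0 x.
Proof.
  unfold inv_supp, rpow_supp. destruct (Rlt_dec 0 x); [rewrite Rpower_O by auto; field|]; lra.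
Qed.

Lemma mpow_0_idem n A : PSD n A -> meq n (mmul n (mpow n A 0) (mpow n A 0)) (mpow n A 0).
Proof.
  intros HA. eapply meq_trans; [apply mfun_mul, HA|].
  unfold mpow. rewrite (mfun_ext_nonneg n A _ (rpow_supp 0)) by (auto using rpow_supp_0_idem).
  apply meq_refl.
Qed.

(* [index_split N m k s r g]: [i ↦ (s i, r i)] is a bijection from [0..N) onto
   [0..m) × [0..k) with inverse [g]; [ampl s r X] is then [X ⊗ 1_k] and
   [pmarg k g R] the partial trace over the second factor. *)
Definition index_split (N m k : nat) (s r : nat -> nat) (g : nat -> nat -> nat) : Prop :=
  (forall i, (i < N)%nat -> (s i < m)%nat /\ (r i < k)%nat /\ g (s i) (r i) = i) /\
  (forall x y, (x < m)%nat -> (y < k)%nat -> (g x y < N)%nat /\ s (g x y) = x /\ r (g x y) = y).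

Definition ampl (s r : nat -> nat) (X : Mat) : Mat :=
  fun i j => Cmul (X (s i) (s j)) (delta (r i) (r j)).
Definition pmarg (k : nat) (g : nat -> nat -> nat) (R : Mat) : Mat :=
  fun x y => csum k (fun z => R (g x z) (g y z)).

Lemma ampl_scale s r c X : ampl s r (mscale c X) = mscale c (ampl s r X).
Proof. extensionality i; extensionality j; unfold ampl, mscale. ceq. Qed.
Lemma ampl_madj s r X : madj (ampl s r X) = ampl s r (madj X).
Proof.
  extensionality i; extensionality j; unfold ampl, madj.
  rewrite Cconj_mul, Cconj_delta, delta_sym. reflexivity.
Qed.

Section IndexSplit.
Variables (N m k : nat) (s r : nat -> nat) (g : nat -> nat -> nat).
Hypothesis Hsplit : index_split N m k s r g.

Lemma delta_split i x y : (i < N)%nat -> (x < m)%nat -> (y < k)%nat ->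
  delta i (g x y) = Cmul (delta (s i) x) (delta (r i) y).
Proof.
  intros Hi Hx Hy. destruct Hsplit as [H1 H2].
  destruct (H1 i Hi) as [_ [_ Hgi]]. destruct (H2 x y Hx Hy) as [_ [Hs Hr]].
  destruct (Nat.eq_dec i (g x y)) as [E|E].
  - rewrite (delta_eq _ _ E), E, Hs, Hr, !delta_eq by auto. ceq.
  - rewrite (delta_neq _ _ E).
    destruct (Nat.eq_dec (s i) x) as [E1|E1]; [destruct (Nat.eq_dec (r i) y) as [E2|E2]|].
    + exfalso. apply E. rewrite <- E1, <- E2. auto.
    + rewrite (delta_neq _ _ E2). ceq.
    + rewrite (delta_neq _ _ E1). ceq.
Qed.

Lemma csum_split F : csum N F = csum m (fun x => csum k (fun y => F (g x y))).
Proof.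
  destruct Hsplit as [H1 H2].
  rewrite (csum_ext m _ (fun x => csum N (fun i => csum k (fun y => Cmul (F i) (delta i (g x y)))))).
  2:{ intros x Hx. rewrite csum_swap. apply csum_ext; intros y Hy.
      rewrite csum_delta_r; auto. apply H2; auto. }
  rewrite csum_swap. apply csum_ext; intros i Hi.
  destruct (H1 i Hi) as [Hs [Hr _]].
  rewrite (csum_ext m _ (fun x => Cmul (delta (s i) x) (F i))).
  - symmetry. apply (csum_delta_l m (s i) (fun _ => F i)); auto.
  - intros x Hx.
    rewrite (csum_ext k _ (fun y => Cmul (delta (s i) x) (Cmul (delta (r i) y) (F i))))
      by (intros y Hy; rewrite delta_split; auto; ceq).
    rewrite csum_mull, (csum_delta_l k (r i) (fun _ => F i)); auto.
Qed.

Lemma ampl_meq X X' : meq m X X' -> meq N (ampl s r X) (ampl s r X').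
Proof.
  intros H i j Hi Hj. destruct Hsplit as [H1 _].
  destruct (H1 i Hi) as [Hsi _]. destruct (H1 j Hj) as [Hsj _].
  unfold ampl. rewrite H; auto.
Qed.

Lemma ampl_mul X Y : meq N (mmul N (ampl s r X) (ampl s r Y)) (ampl s r (mmul m X Y)).
Proof.
  intros i j Hi Hj. destruct Hsplit as [H1 H2].
  destruct (H1 i Hi) as [_ [Hri _]]. destruct (H1 j Hj) as [_ [Hrj _]].
  unfold mmul at 1. rewrite csum_split. unfold ampl, mmul. rewrite <- csum_mulr.
  apply csum_ext; intros x Hx.
  rewrite (csum_ext k _ (fun z => Cmul (delta (r i) z) (Cmul (Cmul (X (s i) x) (Y x (s j))) (delta z (r j))))).
  - rewrite (csum_delta_l k (r i) (fun z => Cmul (Cmul (X (s i) x) (Y x (s j))) (delta z (r j)))); auto.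
  - intros z Hz. destruct (H2 x z Hx Hz) as [_ [-> ->]]. ceq.
Qed.

Lemma trace_mul_ampl R L : trace N (mmul N R (ampl s r L)) = trace m (mmul m (pmarg k g R) L).
Proof.
  destruct Hsplit as [H1 H2]. unfold trace, mmul, ampl, pmarg.
  rewrite csum_split. apply csum_ext; intros x Hx.
  rewrite (csum_ext k _ (fun z => csum m (fun y => Cmul (R (g x z) (g y z)) (L y x)))).
  - rewrite csum_swap. apply csum_ext; intros y Hy. rewrite csum_mulr. reflexivity.
  - intros z Hz. destruct (H2 x z Hx Hz) as [_ [Hsx Hrx]]. rewrite csum_split.
    apply csum_ext; intros y Hy.
    rewrite (csum_ext k _ (fun w => Cmul (Cmul (R (g x z) (g y w)) (L y x)) (delta w z))).
    + rewrite (csum_delta_r k z (fun w => Cmul (R (g x z) (g y w)) (L y x))); auto.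
    + intros w Hw. destruct (H2 y w Hy Hw) as [_ [-> ->]]. rewrite Hsx, Hrx. ceq.
Qed.

Lemma trace_pmarg R : trace m (pmarg k g R) = trace N R.
Proof. unfold trace, pmarg. rewrite csum_split. reflexivity. Qed.

Lemma pmarg_quad R v z : (z < k)%nat ->
  cinner N (fun i => Cmul (v (s i)) (delta (r i) z)) (mvec N R (fun i => Cmul (v (s i)) (delta (r i) z)))
  = csum m (fun x => Cmul (Cconj (v x)) (csum m (fun y => Cmul (R (g x z) (g y z)) (v y)))).
Proof.
  intros Hz. destruct Hsplit as [H1 H2]. unfold cinner, mvec. rewrite csum_split.
  apply csum_ext; intros x Hx.
  set (w z' := Cmul (Cconj (v x)) (csum N (fun i => Cmul (R (g x z') i) (Cmul (v (s i)) (delta (r i) z))))).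
  rewrite (csum_ext k _ (fun z' => Cmul (delta z z') (w z'))).
  - rewrite (csum_delta_l k z w); auto. unfold w. f_equal.
    rewrite csum_split. apply csum_ext; intros y Hy.
    rewrite (csum_ext k _ (fun u => Cmul (Cmul (R (g x z) (g y u)) (v y)) (delta u z))).
    + rewrite (csum_delta_r k z (fun u => Cmul (R (g x z) (g y u)) (v y))); auto.
    + intros u Hu. destruct (H2 y u Hy Hu) as [_ [-> ->]]. ceq.
  - intros z' Hz'. destruct (H2 x z' Hx Hz') as [_ [-> ->]]. unfold w.
    rewrite Cconj_mul, Cconj_delta, delta_sym. ceq.
Qed.

Lemma pmarg_PSD R : PSD N R -> PSD m (pmarg k g R).
Proof.
  intros HR v.
  replace (cinner m v (mvec m (pmarg k g R) v)) with
     (csum k (fun z => cinner N (fun i => Cmul (v (s i)) (delta (r i) z))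
                                 (mvec N R (fun i => Cmul (v (s i)) (delta (r i) z))))).
  - split; [apply csum_Im_eq0 | apply csum_Re_nonneg]; intros; apply HR.
  - rewrite (csum_ext k _ (fun z => csum m (fun x => Cmul (Cconj (v x)) (csum m (fun y => Cmul (R (g x z) (g y z)) (v y))))))
      by (intros; apply pmarg_quad; auto).
    rewrite csum_swap. unfold cinner, mvec, pmarg. apply csum_ext; intros x Hx.
    rewrite csum_mull. f_equal. rewrite csum_swap. apply csum_ext; intros y Hy.
    rewrite csum_mulr. reflexivity.
Qed.

Lemma pmarg_state R : IsState N R -> IsState m (pmarg k g R).
Proof. intros [HR Htr]. split; [apply pmarg_PSD | rewrite trace_pmarg]; auto. Qed.

End IndexSplit.

Lemma divmod_pair q a c : (c < q)%nat -> ((a * q + c) / q = a /\ (a * q + c) mod q = c)%nat.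
Proof.
  intros H. split.
  - symmetry. apply (Nat.div_unique _ q a c); lia.
  - symmetry. apply (Nat.mod_unique _ q a c); lia.
Qed.

Lemma divmod_split q x : q <> 0%nat -> (x = (x / q) * q + x mod q /\ x mod q < q)%nat.
Proof. intros H. split; [rewrite (Nat.div_mod_eq x q) at 1; lia | apply Nat.mod_upper_bound; auto]. Qed.

Section Tripartite.
Variables dA dB dC : nat.
Local Notation N := (NABC dA dB dC).
Local Notation idx := (idx3 dA dB dC).
Local Notation iA := (ixA dA dB dC).
Local Notation iB := (ixB dA dB dC).
Local Notation iC := (ixC dA dB dC).

Lemma ix_idx3 a b c : (a < dA)%nat -> (b < dB)%nat -> (c < dC)%nat ->
  iA (idx a b c) = a /\ iB (idx a b c) = b /\ iC (idx a b c) = c /\ (idx a b c < N)%nat.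
Proof.
  intros Ha Hb Hc. unfold ixA, ixB, ixC, idx3, NABC.
  destruct (divmod_pair dC (a * dB + b) c Hc) as [E1 E2].
  destruct (divmod_pair dB a b Hb) as [F1 F2].
  rewrite (Nat.mul_comm dB dC), <- Nat.Div0.div_div, E1, E2, F1, F2.
  repeat split; auto. assert (a * dB + b < dA * dB)%nat by nia. nia.
Qed.

Lemma idx3_ix i : (i < N)%nat ->
  (iA i < dA)%nat /\ (iB i < dB)%nat /\ (iC i < dC)%nat /\ idx (iA i) (iB i) (iC i) = i.
Proof.
  intros Hi. unfold NABC in Hi.
  assert (dB <> 0%nat) by (intro; subst; lia). assert (dC <> 0%nat) by (intro; subst; lia).
  unfold ixA, ixB, ixC, idx3. rewrite (Nat.mul_comm dB dC), <- Nat.Div0.div_div.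
  destruct (divmod_split dC i) as [E1 E2]; auto.
  destruct (divmod_split dB (i / dC)) as [F1 F2]; auto.
  repeat split; auto; [|lia].
  apply Nat.Div0.div_lt_upper_bound; auto. apply Nat.Div0.div_lt_upper_bound; auto. nia.
Qed.

Definition ixAB (i : nat) : nat := (iA i * dB + iB i)%nat.
Definition gAC (x y : nat) : nat := idx (x / dC) y (x mod dC).
Definition gBC (x y : nat) : nat := idx y (x / dC) (x mod dC).
Definition gC (x y : nat) : nat := idx (y / dB) (y mod dB) x.

Lemma index_split_AC : index_split N (dA * dC) dB (ixAC dA dB dC) iB gAC.
Proof.
  split.
  - intros i Hi. destruct (idx3_ix i Hi) as [A1 [A2 [A3 A4]]]. unfold ixAC, gAC.
    destruct (divmod_pair dC (iA i) (iC i) A3) as [-> ->]. repeat split; auto; nia.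
  - intros x y Hx Hy. unfold gAC, ixAC. assert (dC <> 0%nat) by (intro; subst; lia).
    destruct (divmod_split dC x) as [E1 E2]; auto.
    assert (x / dC < dA)%nat by (apply Nat.Div0.div_lt_upper_bound; lia).
    destruct (ix_idx3 (x / dC) y (x mod dC)) as [-> [-> [-> B4]]]; repeat split; auto; lia.
Qed.

Lemma index_split_BC : index_split N (dB * dC) dA (ixBC dA dB dC) iA gBC.
Proof.
  split.
  - intros i Hi. destruct (idx3_ix i Hi) as [A1 [A2 [A3 A4]]]. unfold ixBC, gBC.
    destruct (divmod_pair dC (iB i) (iC i) A3) as [-> ->]. repeat split; auto; nia.
  - intros x y Hx Hy. unfold gBC, ixBC. assert (dC <> 0%nat) by (intro; subst; lia).
    destruct (divmod_split dC x) as [E1 E2]; auto.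
    assert (x / dC < dB)%nat by (apply Nat.Div0.div_lt_upper_bound; lia).
    destruct (ix_idx3 y (x / dC) (x mod dC)) as [-> [-> [-> B4]]]; repeat split; auto; lia.
Qed.

Lemma index_split_C : index_split N dC (dA * dB) iC ixAB gC.
Proof.
  split.
  - intros i Hi. destruct (idx3_ix i Hi) as [A1 [A2 [A3 A4]]]. unfold ixAB, gC.
    destruct (divmod_pair dB (iA i) (iB i) A2) as [-> ->]. repeat split; auto; nia.
  - intros x y Hx Hy. unfold gC, ixAB. assert (dB <> 0%nat) by (intro; subst; lia).
    destruct (divmod_split dB y) as [E1 E2]; auto.
    assert (y / dB < dA)%nat by (apply Nat.Div0.div_lt_upper_bound; lia).
    destruct (ix_idx3 (y / dB) (y mod dB) x) as [-> [-> [-> B4]]]; repeat split; auto; lia.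
Qed.

Lemma index_split_AB : index_split (dA * dB) dA dB (fun y => y / dB)%nat (fun y => y mod dB)%nat
  (fun a b => a * dB + b)%nat.
Proof.
  split.
  - intros i Hi. assert (dB <> 0%nat) by (intro; subst; lia).
    destruct (divmod_split dB i) as [E1 E2]; auto. repeat split; auto.
    apply Nat.Div0.div_lt_upper_bound; lia.
  - intros x y Hx Hy. destruct (divmod_pair dB x y Hy) as [-> ->]. repeat split; auto; nia.
Qed.

Lemma extAC_ampl X : extAC dA dB dC X = ampl (ixAC dA dB dC) iB X.
Proof. reflexivity. Qed.
Lemma extBC_ampl X : extBC dA dB dC X = ampl (ixBC dA dB dC) iA X.
Proof. reflexivity. Qed.
Lemma extC_ampl X : meq N (extC dA dB dC X) (ampl iC ixAB X).
Proof.
  intros i j Hi Hj.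
  destruct (idx3_ix i Hi) as [_ [Bi _]]. destruct (idx3_ix j Hj) as [_ [Bj _]].
  unfold extC, ampl, ixAB. f_equal.
  destruct (divmod_pair dB (iA i) (iB i) Bi) as [Ai' Bi'].
  destruct (divmod_pair dB (iA j) (iB j) Bj) as [Aj' Bj'].
  destruct (Nat.eq_dec (iA i) (iA j)) as [E|E];
    [destruct (Nat.eq_dec (iB i) (iB j)) as [F|F]|].
  - rewrite E, F, !delta_eq by auto. ceq.
  - rewrite (delta_neq _ _ F), (delta_neq (_ + _)); [ceq|].
    intros H. apply F. rewrite <- Bi', <- Bj', H. reflexivity.
  - rewrite (delta_neq _ _ E), (delta_neq (_ + _)); [ceq|].
    intros H. apply E. rewrite <- Ai', <- Aj', H. reflexivity.
Qed.

Lemma margAC_pmarg rho : margAC dA dB dC rho = pmarg dB gAC rho.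
Proof. reflexivity. Qed.
Lemma margBC_pmarg rho : margBC dA dB dC rho = pmarg dA gBC rho.
Proof. reflexivity. Qed.
Lemma margC_pmarg rho : margC dA dB dC rho = pmarg (dA * dB) gC rho.
Proof.
  extensionality x; extensionality y. unfold margC, pmarg.
  rewrite (csum_split _ _ _ _ _ _ index_split_AB). apply csum_ext; intros a Ha.
  apply csum_ext; intros b Hb. unfold gC. destruct (divmod_pair dB a b Hb) as [-> ->]. reflexivity.
Qed.

End Tripartite.

Definition lfix (n : nat) (P A : Mat) : Prop := meq n (mmul n P A) A.
Definition rfix (n : nat) (A P : Mat) : Prop := meq n (mmul n A P) A.

Lemma madj_mmul_meq n A B C : meq n (madj A) A -> meq n (madj B) B -> meq n (madj C) C ->
  meq n (mmul n A B) C -> meq n (mmul n B A) C.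
Proof.
  intros HA HB HC H. eapply meq_trans; [apply mmul_meq; apply meq_sym; eauto|].
  rewrite <- madj_mmul. eapply meq_trans; [apply madj_meq, H | exact HC].
Qed.

Lemma lfix_of_supp_sub n rho A P : supp_sub n rho A -> lfix n P A -> lfix n P rho.
Proof.
  intros S HPA i j Hi Hj.
  destruct (S (fun l => delta l j)) as [w Hw].
  assert (Hcol : forall l, (l < n)%nat -> rho l j = mvec n A w l).
  { intros l Hl. rewrite <- Hw by auto. unfold mvec. rewrite csum_delta_r; auto. }
  unfold mmul. rewrite (csum_ext n _ (fun l => Cmul (P i l) (mvec n A w l))) by (intros; rewrite Hcol; auto).
  change (mvec n P (mvec n A w) i = rho i j).
  rewrite <- mvec_mmul, Hcol by auto. apply mvec_meq; auto.
Qed.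

Lemma supp_sub_of_lfix n rho A B : lfix n (mmul n A B) rho -> supp_sub n rho A.
Proof.
  intros H v. exists (mvec n B (mvec n rho v)). intros i Hi.
  rewrite <- !mvec_mmul. symmetry. apply mvec_meq; auto.
Qed.

(* With [B := √ρ - √ρ P] one gets [Tr B* B = Tr ρ - Tr ρ P = 0], so [√ρ P = √ρ]. *)
Lemma rfix_of_trace n rho P : PSD n rho -> meq n (madj P) P -> meq n (mmul n P P) P ->
  trace n (mmul n rho P) = trace n rho -> rfix n rho P.
Proof.
  intros Hr HPadj HPidem Htr.
  set (h := mpow n rho (1/2)).
  assert (Hh : meq n (mmul n h h) rho).
  { eapply meq_trans; [apply mfun_mul, Hr|]. apply mfun_eq_self; auto using rpow_supp_half_sq. }
  set (B := madd h (mopp (mmul n h P))).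
  assert (HBadj : madj B = madd h (mopp (mmul n (madj P) h))).
  { assert (Hhadj : madj h = h) by apply madj_mfun.
    unfold B. extensionality i; extensionality j. unfold madj at 1, madd at 1 2, mopp at 1 2.
    rewrite Cconj_add.
    change (Cadd (madj h i j) (Cconj (Copp (mmul n h P j i))) = Cadd (h i j) (Copp (mmul n (madj P) h i j))).
    rewrite Hhadj. f_equal.
    replace (Cconj (Copp (mmul n h P j i))) with (Copp (madj (mmul n h P) i j)) by ceq.
    rewrite madj_mmul, Hhadj. reflexivity. }
  assert (T1 : trace n (mmul n h (mmul n h P)) = trace n rho)
    by (rewrite <- mmul_assoc, <- Htr; apply trace_meq, mmul_meq_l, Hh).
  assert (T2 : trace n (mmul n (mmul n (madj P) h) h) = trace n rho)
    by (rewrite mmul_assoc, trace_cyc, <- Htr; apply trace_meq, mmul_meq; auto).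
  assert (T3 : trace n (mmul n (mmul n (madj P) h) (mmul n h P)) = trace n rho).
  { rewrite mmul_assoc, <- (mmul_assoc n h h P), trace_cyc, mmul_assoc, <- Htr.
    apply trace_meq, mmul_meq; [apply Hh|]. eapply meq_trans; [apply mmul_meq_r, HPadj | exact HPidem]. }
  assert (HB0 : meq n B mzero).
  { apply trace_adj_mul_eq0. rewrite HBadj. unfold B.
    rewrite !mmul_addr, !mmul_addl, !mmul_oppr, !mmul_oppl, !trace_add, !trace_opp.
    rewrite (trace_meq n (mmul n h h) rho Hh), T1, T2, T3. simpl. ring. }
  assert (HhP : meq n (mmul n h P) h).
  { intros i j Hi Hj. specialize (HB0 i j Hi Hj). unfold B, madd, mopp, mzero in HB0.
    destruct (h i j), (mmul n h P i j). injection HB0; intros; apply Cplx_eq; simpl; lra. }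
  eapply meq_trans; [apply mmul_meq_l, meq_sym, Hh|].
  rewrite mmul_assoc. eapply meq_trans; [apply mmul_meq_r, HhP | exact Hh].
Qed.

Section MarginalSupport.
Variables (N m k : nat) (s r : nat -> nat) (g : nat -> nat -> nat).
Hypothesis Hsplit : index_split N m k s r g.
Variable rho : Mat.
Hypothesis Hrho : PSD N rho.

Lemma lfix_ampl_supp X : PSD m X -> supp_sub N rho (ampl s r X) ->
  lfix N (ampl s r (mpow m X 0)) rho.
Proof.
  intros HX S. apply (lfix_of_supp_sub N rho (ampl s r X)); auto.
  eapply meq_trans; [apply (ampl_mul N m k s r g Hsplit)|].
  apply (ampl_meq N m k s r g Hsplit), mpow_0_fix_l, HX.
Qed.

Lemma supp_sub_ampl_pmarg : supp_sub N rho (ampl s r (pmarg k g rho)).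
Proof.
  set (M := pmarg k g rho).
  assert (HM : PSD m M) by (apply (pmarg_PSD N m k s r g Hsplit); auto).
  set (P := ampl s r (mpow m M 0)).
  assert (HPadj : meq N (madj P) P) by (unfold P; rewrite ampl_madj; unfold mpow; rewrite madj_mfun; apply meq_refl).
  assert (HPidem : meq N (mmul N P P) P).
  { eapply meq_trans; [apply (ampl_mul N m k s r g Hsplit)|].
    apply (ampl_meq N m k s r g Hsplit), mpow_0_idem, HM. }
  assert (Htr : trace N (mmul N rho P) = trace N rho).
  { unfold P. rewrite (trace_mul_ampl N m k s r g Hsplit). fold M.
    rewrite (trace_meq m _ M) by (apply mpow_0_fix_r, HM).
    apply (trace_pmarg N m k s r g Hsplit). }
  assert (HPrho : lfix N P rho).
  { apply (madj_mmul_meq N rho P rho); auto using madj_PSD. apply rfix_of_trace; auto. }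
  apply (supp_sub_of_lfix N rho _ (ampl s r (mfun inv_supp m M))).
  eapply meq_trans; [apply mmul_meq_l | exact HPrho].
  eapply meq_trans; [apply (ampl_mul N m k s r g Hsplit)|].
  apply (ampl_meq N m k s r g Hsplit).
  eapply meq_trans; [apply mmul_meq_l, mfun_id, HM|].
  eapply meq_trans; [apply mfun_mul, HM|].
  unfold mpow. rewrite (mfun_ext_nonneg m M _ (rpow_supp 0)) by (auto using mul_inv_supp).
  apply meq_refl.
Qed.

End MarginalSupport.

Definition cderiv1 (f : R -> Cplx) (f' : Cplx) : Prop :=
  derivable_pt_lim (fun a => Re (f a)) 1 (Re f') /\ derivable_pt_lim (fun a => Im (f a)) 1 (Im f').

Lemma cderiv1_eq f d d' : cderiv1 f d -> d = d' -> cderiv1 f d'.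
Proof. intros H ->; auto. Qed.
Lemma cderiv1_ext f g d : (forall a, f a = g a) -> cderiv1 f d -> cderiv1 g d.
Proof. intros H. replace g with f; auto. extensionality a; auto. Qed.

Lemma cderiv1_const c : cderiv1 (fun _ => c) C0.
Proof. split; simpl; apply derivable_pt_lim_const. Qed.

Lemma cderiv1_real h h' : derivable_pt_lim h 1 h' -> cderiv1 (fun a => RtoC (h a)) (RtoC h').
Proof. intros H; split; simpl; auto. apply derivable_pt_lim_const. Qed.

Lemma cderiv1_add f g f' g' : cderiv1 f f' -> cderiv1 g g' ->
  cderiv1 (fun a => Cadd (f a) (g a)) (Cadd f' g').
Proof.
  intros [H1 H2] [H3 H4]; split; simpl.
  - apply (derivable_pt_lim_plus (fun a => Re (f a)) (fun a => Re (g a))); auto.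
  - apply (derivable_pt_lim_plus (fun a => Im (f a)) (fun a => Im (g a))); auto.
Qed.

Lemma cderiv1_mul f g f' g' : cderiv1 f f' -> cderiv1 g g' ->
  cderiv1 (fun a => Cmul (f a) (g a)) (Cadd (Cmul f' (g 1)) (Cmul (f 1) g')).
Proof.
  intros [H1 H2] [H3 H4]; split; simpl.
  - pose proof (derivable_pt_lim_minus _ _ _ _ _
      (derivable_pt_lim_mult _ _ _ _ _ H1 H3) (derivable_pt_lim_mult _ _ _ _ _ H2 H4)) as D.
    unfold minus_fct, mult_fct in D.
    replace (Re f' * Re (g 1) - Im f' * Im (g 1) + (Re (f 1) * Re g' - Im (f 1) * Im g'))
      with (Re f' * Re (g 1) + Re (f 1) * Re g' - (Im f' * Im (g 1) + Im (f 1) * Im g')) by ring.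
    exact D.
  - pose proof (derivable_pt_lim_plus _ _ _ _ _
      (derivable_pt_lim_mult _ _ _ _ _ H1 H4) (derivable_pt_lim_mult _ _ _ _ _ H2 H3)) as D.
    unfold plus_fct, mult_fct in D.
    replace (Re f' * Im (g 1) + Im f' * Re (g 1) + (Re (f 1) * Im g' + Im (f 1) * Re g'))
      with (Re f' * Im (g 1) + Re (f 1) * Im g' + (Im f' * Re (g 1) + Im (f 1) * Re g')) by ring.
    exact D.
Qed.

Lemma cderiv1_csum n f f' : (forall k, (k < n)%nat -> cderiv1 (fun a => f a k) (f' k)) ->
  cderiv1 (fun a => csum n (f a)) (csum n f').
Proof.
  induction n; intros H; simpl; [apply cderiv1_const|].
  apply cderiv1_add; [apply IHn; intros|]; apply H; lia.
Qed.

Definition mderiv1 (n : nat) (F : R -> Mat) (F1 F' : Mat) : Prop :=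
  meq n (F 1) F1 /\ (forall i j, (i < n)%nat -> (j < n)%nat -> cderiv1 (fun a => F a i j) (F' i j)).

Lemma mderiv1_mul n F G F1 G1 F' G' : mderiv1 n F F1 F' -> mderiv1 n G G1 G' ->
  mderiv1 n (fun a => mmul n (F a) (G a)) (mmul n F1 G1) (madd (mmul n F' G1) (mmul n F1 G')).
Proof.
  intros [HF1 HF] [HG1 HG]. split; [apply mmul_meq; auto|].
  intros i j Hi Hj. unfold madd, mmul. rewrite <- csum_add.
  apply cderiv1_csum. intros k Hk. eapply cderiv1_eq; [apply cderiv1_mul; auto|].
  cbv beta. rewrite HF1, HG1 by auto. reflexivity.
Qed.

Lemma mderiv1_meq n F G F1 F' : (forall a, meq n (F a) (G a)) -> mderiv1 n F F1 F' -> mderiv1 n G F1 F'.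
Proof.
  intros H [H1 H2]. split.
  - eapply meq_trans; [apply meq_sym, H | auto].
  - intros i j Hi Hj. eapply cderiv1_ext; [|apply H2; auto]. intros a; apply H; auto.
Qed.

Lemma mderiv1_trace n F F1 F' : mderiv1 n F F1 F' ->
  derivable_pt_lim (fun a => Re (trace n (F a))) 1 (Re (trace n F')).
Proof. intros [_ H]. apply cderiv1_csum. intros; apply H; auto. Qed.

Lemma rpow_supp_deriv x t t' : derivable_pt_lim t 1 t' ->
  derivable_pt_lim (fun a => rpow_supp (t a) x) 1 (t' * (ln_supp x * rpow_supp (t 1) x)).
Proof.
  intros Ht. unfold rpow_supp, ln_supp. destruct (Rlt_dec 0 x) as [Hx|Hx].
  - unfold Rpower.
    pose proof (derivable_pt_lim_comp (fun a => ln x * t a) exp 1 _ (exp (ln x * t 1))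
      (derivable_pt_lim_scal t (ln x) 1 t' Ht) (derivable_pt_lim_exp _)) as D.
    unfold comp, mult_real_fct in D.
    replace (fun a => exp (t a * ln x)) with (fun a => exp (ln x * t a))
      by (extensionality a; f_equal; ring).
    replace (t' * (ln x * exp (t 1 * ln x))) with (exp (ln x * t 1) * (ln x * t'))
      by (rewrite (Rmult_comm (t 1)); ring).
    exact D.
  - replace (t' * (0 * 0)) with 0 by ring. apply derivable_pt_lim_const.
Qed.

Lemma mderiv1_mpow n A t t' : derivable_pt_lim t 1 t' ->
  mderiv1 n (fun a => mpow n A (t a)) (mpow n A (t 1))
    (mfun (fun x => t' * (ln_supp x * rpow_supp (t 1) x)) n A).
Proof.
  intros Ht. split; [apply meq_refl|].
  intros i j Hi Hj. unfold mpow, mfun. apply cderiv1_csum. intros k Hk.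
  eapply cderiv1_eq.
  - apply cderiv1_mul; [apply cderiv1_mul; [apply cderiv1_const | apply cderiv1_real, rpow_supp_deriv; eauto]|].
    apply cderiv1_const.
  - ceq.
Qed.

Lemma mderiv1_ampl N m k s r g F F1 F' : index_split N m k s r g -> mderiv1 m F F1 F' ->
  mderiv1 N (fun a => ampl s r (F a)) (ampl s r F1) (ampl s r F').
Proof.
  intros Hsplit [H1 H2]. split; [apply (ampl_meq N m k s r g Hsplit); auto|].
  intros i j Hi Hj. destruct Hsplit as [Hs _].
  destruct (Hs i Hi) as [Hsi _]. destruct (Hs j Hj) as [Hsj _].
  unfold ampl. eapply cderiv1_eq; [apply cderiv1_mul; [apply H2; auto | apply cderiv1_const]|]. ceq.
Qed.

Lemma deriv_one_minus c : derivable_pt_lim (fun a => (1 - a) * c) 1 (- c).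
Proof.
  pose proof (derivable_pt_lim_mult _ (fct_cte c) 1 _ 0
    (derivable_pt_lim_minus (fct_cte 1) id 1 0 1 (derivable_pt_lim_const 1 1) (derivable_pt_lim_id 1))
    (derivable_pt_lim_const c 1)) as D.
  unfold mult_fct, minus_fct, fct_cte, id in D.
  replace (- c) with ((0 - 1) * c + (1 - 1) * 0) by ring. exact D.
Qed.

Lemma deriv_one_minus_half c : derivable_pt_lim (fun a => (1 - a) * c / 2) 1 (- c / 2).
Proof.
  pose proof (derivable_pt_lim_scal _ (/2) 1 _ (deriv_one_minus c)) as D.
  unfold mult_real_fct in D.
  replace (fun a => (1 - a) * c / 2) with (fun a => / 2 * ((1 - a) * c)) by (extensionality a; field).
  replace (- c / 2) with (/ 2 * - c) by field. exact D.
Qed.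

(* The quotient is the difference quotient of [ln ∘ F] at [1], since [ln F(1) = 0]. *)
Lemma limit_ln_div_of_deriv F D : derivable_pt_lim F 1 D -> F 1 = 1 ->
  limit1_in (fun a => / (a - 1) * ln (F a)) (fun a => a <> 1) D 1.
Proof.
  intros HD H1.
  assert (HL : derivable_pt_lim (comp ln F) 1 (/ F 1 * D))
    by (apply derivable_pt_lim_comp; auto; apply derivable_pt_lim_ln; lra).
  rewrite H1, Rinv_1, Rmult_1_l in HL.
  intros eps Heps. destruct (HL eps Heps) as [del Hdel].
  exists del. split; [apply cond_pos|].
  intros x [Hx1 Hx2]. simpl in *. unfold R_dist in *.
  specialize (Hdel (x - 1) ltac:(lra) Hx2). unfold comp in Hdel.
  replace (1 + (x - 1)) with x in Hdel by ring. rewrite H1, ln_1 in Hdel.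
  replace (/ (x - 1) * ln (F x)) with ((ln (F x) - 0) / (x - 1)) by (field; lra). exact Hdel.
Qed.

Lemma lfix_mul n P Q A : lfix n P A -> lfix n Q A -> lfix n (mmul n P Q) A.
Proof.
  intros HP HQ. unfold lfix. rewrite mmul_assoc.
  eapply meq_trans; [apply mmul_meq_r, HQ | exact HP].
Qed.

Lemma trace_lfix n P A : lfix n P A -> trace n (mmul n A P) = trace n A.
Proof. intros H. rewrite trace_cyc. apply trace_meq, H. Qed.

Lemma trace_rfix_l n A L W : rfix n A L -> trace n (mmul n A (mmul n L W)) = trace n (mmul n A W).
Proof. intros H. rewrite <- mmul_assoc. apply trace_meq, mmul_meq_l, H. Qed.

Lemma trace_lfix_r n A W P : lfix n P A -> trace n (mmul n A (mmul n W P)) = trace n (mmul n A W).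
Proof. intros H. rewrite <- mmul_assoc, trace_cyc, <- mmul_assoc. apply trace_meq, mmul_meq_l, H. Qed.

(* Leibniz rule for a product of five factors, evaluated against a state that
   every factor fixes on both sides: only the differentiated factor survives. *)
Lemma trace_deriv_product5 n A V1 V2 V3 V4 V5 D1 D2 D3 D4 D5 :
  lfix n V1 A -> lfix n V2 A -> lfix n V3 A -> lfix n V4 A -> lfix n V5 A ->
  rfix n A V1 -> rfix n A V2 -> rfix n A V3 -> rfix n A V4 ->
  trace n (mmul n A
    (madd (mmul n D1 (mmul n V2 (mmul n V3 (mmul n V4 V5))))
      (mmul n V1 (madd (mmul n D2 (mmul n V3 (mmul n V4 V5)))
        (mmul n V2 (madd (mmul n D3 (mmul n V4 V5))
          (mmul n V3 (madd (mmul n D4 V5) (mmul n V4 D5))))))))) =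
  Cadd (trace n (mmul n A D1)) (Cadd (trace n (mmul n A D2))
    (Cadd (trace n (mmul n A D3)) (Cadd (trace n (mmul n A D4)) (trace n (mmul n A D5))))).
Proof.
  intros. rewrite !mmul_addr, !trace_add.
  rewrite !(trace_rfix_l n A V1), !(trace_rfix_l n A V2), !(trace_rfix_l n A V3),
    !(trace_rfix_l n A V4) by assumption.
  rewrite !(trace_lfix_r n A) by auto using lfix_mul.
  reflexivity.
Qed.

Definition slotLog (dA dB dC : nat) (tau theta omega : Mat) (S : slot) : Mat :=
  match S with
  | sTau => extAC dA dB dC (mlog (dA * dC) tau)
  | sTheta => extBC dA dB dC (mlog (dB * dC) theta)
  | sOmega => extC dA dB dC (mlog dC omega)
  end.

Lemma mfun_log_scale c n A :
  mfun (fun x => c * (ln_supp x * rpow_supp 0 x)) n A = mscale (RtoC c) (mlog n A).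
Proof.
  extensionality i; extensionality j. unfold mlog, mfun, mscale; cbv zeta.
  rewrite <- csum_mull. apply csum_ext; intros k _.
  set (x := snd (chosen_decomp n A) k).
  replace (c * (ln_supp x * rpow_supp 0 x)) with (c * ln_supp x)
    by (unfold ln_supp, rpow_supp; destruct (Rlt_dec 0 x); [rewrite Rpower_O by auto|]; ring).
  rewrite RtoC_mul. ceq.
Qed.

Section Slots.
Variables (dA dB dC : nat) (tau theta omega : Mat).
Local Notation N := (NABC dA dB dC).
Local Notation P := (slotPow dA dB dC tau theta omega).
Local Notation L := (slotLog dA dB dC tau theta omega).

Lemma mderiv1_slotPow S t t' : derivable_pt_lim t 1 t' -> t 1 = 0 ->
  mderiv1 N (fun a => P S (t a)) (P S 0) (mscale (RtoC t') (L S)).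
Proof.
  intros Ht Ht1.
  destruct S; simpl.
  - pose proof (mderiv1_ampl _ _ _ _ _ _ _ _ _ (index_split_AC dA dB dC) (mderiv1_mpow (dA * dC) tau t t' Ht)) as M.
    rewrite Ht1, mfun_log_scale, ampl_scale in M. exact M.
  - pose proof (mderiv1_ampl _ _ _ _ _ _ _ _ _ (index_split_C dA dB dC) (mderiv1_mpow dC omega t t' Ht)) as M.
    rewrite Ht1, mfun_log_scale, ampl_scale in M.
    eapply mderiv1_meq; [intros a; apply meq_sym, extC_ampl|]. destruct M as [M1 M2]. split.
    + eapply meq_trans; [apply M1 | apply meq_sym, extC_ampl].
    + intros i j Hi Hj. eapply cderiv1_eq; [apply M2; auto|]. unfold mscale. rewrite extC_ampl; auto.
  - pose proof (mderiv1_ampl _ _ _ _ _ _ _ _ _ (index_split_BC dA dB dC) (mderiv1_mpow (dB * dC) theta t t' Ht)) as M.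
    rewrite Ht1, mfun_log_scale, ampl_scale in M. exact M.
Qed.

Definition Kderiv (X Y Z : slot) : Mat :=
  let D S c := mscale (RtoC c) (L S) in
  madd (mmul N (D X (- esign X / 2)) (mmul N (P Y 0) (mmul N (P Z 0) (mmul N (P Y 0) (P X 0)))))
    (mmul N (P X 0) (madd (mmul N (D Y (- esign Y / 2)) (mmul N (P Z 0) (mmul N (P Y 0) (P X 0))))
      (mmul N (P Y 0) (madd (mmul N (D Z (- esign Z)) (mmul N (P Y 0) (P X 0)))
        (mmul N (P Z 0) (madd (mmul N (D Y (- esign Y / 2)) (P X 0))
          (mmul N (P Y 0) (D X (- esign X / 2))))))))).

Lemma mderiv1_Kp X Y Z :
  mderiv1 N (fun a => Kp dA dB dC tau theta omega X Y Z (1 - a)) (Kp dA dB dC tau theta omega X Y Z 0)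
    (Kderiv X Y Z).
Proof.
  unfold Kp, Kderiv. cbv zeta.
  replace (0 * esign X / 2) with 0 by field. replace (0 * esign Y / 2) with 0 by field.
  replace (0 * esign Z) with 0 by ring.
  assert (HX := mderiv1_slotPow X _ _ (deriv_one_minus_half (esign X)) ltac:(cbv beta; field)).
  assert (HY := mderiv1_slotPow Y _ _ (deriv_one_minus_half (esign Y)) ltac:(cbv beta; field)).
  assert (HZ := mderiv1_slotPow Z _ _ (deriv_one_minus (esign Z)) ltac:(cbv beta; ring)).
  repeat apply mderiv1_mul; assumption.
Qed.

End Slots.

Section RenyiAtOne.
Variables (dA dB dC : nat) (rho tau theta omega : Mat).
Local Notation N := (NABC dA dB dC).
Local Notation P := (slotPow dA dB dC tau theta omega).
Local Notation L := (slotLog dA dB dC tau theta omega).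
Hypothesis Hrho : IsState N rho.
Hypothesis Htau : IsState (dA * dC) tau.
Hypothesis Htheta : IsState (dB * dC) theta.
Hypothesis Homega : IsState dC omega.
Hypothesis Stau : supp_sub N rho (extAC dA dB dC tau).
Hypothesis Stheta : supp_sub N rho (extBC dA dB dC theta).
Hypothesis Somega : supp_sub N rho (extC dA dB dC omega).

Lemma slotPow_0_lfix S : lfix N (P S 0) rho.
Proof.
  destruct Hrho as [Hr _]. destruct S; simpl.
  - apply (lfix_ampl_supp N _ _ _ _ _ (index_split_AC dA dB dC)); auto. apply Htau.
  - eapply meq_trans; [apply mmul_meq_l, extC_ampl|].
    apply (lfix_ampl_supp N _ _ _ _ _ (index_split_C dA dB dC)); auto; [apply Homega|].
    eapply supp_sub_meq; [apply extC_ampl | exact Somega].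
  - apply (lfix_ampl_supp N _ _ _ _ _ (index_split_BC dA dB dC)); auto. apply Htheta.
Qed.

Lemma slotPow_hermitian S t : meq N (madj (P S t)) (P S t).
Proof.
  destruct S; simpl; unfold mpow.
  - rewrite extAC_ampl, ampl_madj, madj_mfun. apply meq_refl.
  - eapply meq_trans; [apply madj_meq, extC_ampl|].
    rewrite ampl_madj, madj_mfun. apply meq_sym, extC_ampl.
  - rewrite extBC_ampl, ampl_madj, madj_mfun. apply meq_refl.
Qed.

Lemma slotPow_0_rfix S : rfix N rho (P S 0).
Proof.
  apply madj_mmul_meq; [apply slotPow_hermitian | apply madj_PSD, Hrho | apply madj_PSD, Hrho |].
  apply slotPow_0_lfix.
Qed.

Lemma slotPow_0_lfix_mul S A : lfix N (P S 0) (mmul N rho A).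
Proof. unfold lfix. rewrite <- mmul_assoc. apply mmul_meq_l, slotPow_0_lfix. Qed.

Lemma rho_log_rho : meq N (mfun (fun x => 1 * (ln_supp x * rpow_supp 1 x)) N rho) (mmul N rho (mlog N rho)).
Proof.
  destruct Hrho as [Hr _]. apply meq_sym.
  eapply meq_trans; [apply mmul_meq_l, mfun_id, Hr | eapply meq_trans; [apply mfun_mul, Hr|]].
  rewrite (mfun_ext_nonneg N rho _ (fun x => 1 * (ln_supp x * rpow_supp 1 x))); [apply meq_refl | auto|].
  intros x Hx. unfold rpow_supp, ln_supp.
  destruct (Rlt_dec 0 x); [rewrite Rpower_1 by auto|]; ring.
Qed.

Definition renyi_trace (X Y Z : slot) (alpha : R) : R :=
  Re (trace N (mmul N (mpow N rho alpha) (Kp dA dB dC tau theta omega X Y Z (1 - alpha)))).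

Lemma renyi_trace_at_1 X Y Z : renyi_trace X Y Z 1 = 1.
Proof.
  destruct Hrho as [Hr Htr]. unfold renyi_trace.
  rewrite Rminus_diag, (trace_meq N _ (mmul N rho (Kp dA dB dC tau theta omega X Y Z 0)))
    by (apply mmul_meq_l, mpow_1, Hr).
  unfold Kp. cbv zeta. rewrite !Rmult_0_l, !Rdiv_0_l.
  rewrite trace_lfix by (repeat apply lfix_mul; apply slotPow_0_lfix).
  rewrite Htr. reflexivity.
Qed.

Lemma renyi_trace_deriv X Y Z :
  derivable_pt_lim (renyi_trace X Y Z) 1
    (Re (trace N (mmul N rho (mlog N rho)))
     - esign X * Re (trace N (mmul N rho (L X)))
     - esign Y * Re (trace N (mmul N rho (L Y)))
     - esign Z * Re (trace N (mmul N rho (L Z)))).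
Proof.
  destruct Hrho as [Hr _].
  pose proof (mderiv1_mul N _ _ _ _ _ _ (mderiv1_mpow N rho (fun a => a) 1 (derivable_pt_lim_id 1))
    (mderiv1_Kp dA dB dC tau theta omega X Y Z)) as HD.
  apply mderiv1_trace in HD. unfold renyi_trace.
  match type of HD with derivable_pt_lim _ _ ?d => replace (_ - _) with d; [exact HD|] end.
  rewrite trace_add.
  rewrite (trace_meq N _ (mmul N (mmul N rho (mlog N rho)) (Kp dA dB dC tau theta omega X Y Z 0)))
    by (apply mmul_meq_l, rho_log_rho).
  rewrite (trace_meq N (mmul N (mpow N rho 1) _) (mmul N rho (Kderiv dA dB dC tau theta omega X Y Z)))
    by (apply mmul_meq_l, mpow_1, Hr).
  unfold Kp, Kderiv. cbv zeta. rewrite !Rmult_0_l, !Rdiv_0_l.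
  rewrite trace_lfix by (repeat apply lfix_mul; apply slotPow_0_lfix_mul).
  rewrite trace_deriv_product5 by (apply slotPow_0_lfix || apply slotPow_0_rfix).
  rewrite !mmul_scaler, !trace_scale. simpl. field.
Qed.

Lemma DeltaQ_alpha_limit X Y Z : X <> Y -> Y <> Z -> X <> Z ->
  limit1_in (DeltaQ_alpha dA dB dC rho tau theta omega X Y Z) (fun a => a <> 1)
    (DeltaQ dA dB dC rho tau theta omega) 1.
Proof.
  intros HXY HYZ HXZ.
  apply (limit_ln_div_of_deriv (renyi_trace X Y Z)); [|apply renyi_trace_at_1].
  replace (DeltaQ dA dB dC rho tau theta omega) with
    (Re (trace N (mmul N rho (mlog N rho))) - esign X * Re (trace N (mmul N rho (L X)))
     - esign Y * Re (trace N (mmul N rho (L Y))) - esign Z * Re (trace N (mmul N rho (L Z))));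
    [apply renyi_trace_deriv|].
  unfold DeltaQ. rewrite !mmul_addr, !mmul_oppr, !trace_add, !trace_opp.
  destruct X, Y, Z; try congruence; simpl; ring.
Qed.

End RenyiAtOne.

Section Marginals.
Variables (dA dB dC : nat) (rho : Mat).
Local Notation N := (NABC dA dB dC).

Lemma marginal_states : IsState N rho ->
  IsState (dA * dC) (margAC dA dB dC rho) /\ IsState (dB * dC) (margBC dA dB dC rho) /\
  IsState dC (margC dA dB dC rho).
Proof.
  intros Hr. rewrite margAC_pmarg, margBC_pmarg, margC_pmarg.
  split; [|split]; eapply pmarg_state; eauto using index_split_AC, index_split_BC, index_split_C.
Qed.

Lemma marginal_supports : PSD N rho ->
  supp_sub N rho (extAC dA dB dC (margAC dA dB dC rho)) /\
  supp_sub N rho (extBC dA dB dC (margBC dA dB dC rho)) /\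
  supp_sub N rho (extC dA dB dC (margC dA dB dC rho)).
Proof.
  intros Hr. rewrite extAC_ampl, extBC_ampl, margAC_pmarg, margBC_pmarg. split; [|split].
  - apply (supp_sub_ampl_pmarg _ _ _ _ _ _ (index_split_AC dA dB dC)); auto.
  - apply (supp_sub_ampl_pmarg _ _ _ _ _ _ (index_split_BC dA dB dC)); auto.
  - eapply supp_sub_meq; [apply meq_sym, extC_ampl|]. rewrite margC_pmarg.
    apply (supp_sub_ampl_pmarg _ _ _ _ _ _ (index_split_C dA dB dC)); auto.
Qed.

Lemma CMI_eq_DeltaQ :
  CMI dA dB dC rho = DeltaQ dA dB dC rho (margAC dA dB dC rho) (margBC dA dB dC rho) (margC dA dB dC rho).
Proof.
  unfold DeltaQ, CMI, entropy. rewrite !mmul_addr, !mmul_oppr, !trace_add, !trace_opp.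
  rewrite extAC_ampl, extBC_ampl, (trace_meq N (mmul N rho (extC dA dB dC _)) _)
    by (apply mmul_meq_r, extC_ampl).
  rewrite (trace_mul_ampl _ _ _ _ _ _ (index_split_AC dA dB dC)),
    (trace_mul_ampl _ _ _ _ _ _ (index_split_BC dA dB dC)),
    (trace_mul_ampl _ _ _ _ _ _ (index_split_C dA dB dC)).
  rewrite <- margAC_pmarg, <- margBC_pmarg, <- margC_pmarg. simpl. ring.
Qed.

End Marginals.

Theorem mainTheorem7 :
  forall (dA dB dC : nat) (rho : Mat),
    IsState (NABC dA dB dC) rho ->
    (forall (tau theta omega : Mat),
        IsState (dA * dC) tau -> IsState (dB * dC) theta -> IsState dC omega ->
        supp_sub (NABC dA dB dC) rho (extAC dA dB dC tau) ->
        supp_sub (NABC dA dB dC) rho (extBC dA dB dC theta) ->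
        supp_sub (NABC dA dB dC) rho (extC dA dB dC omega) ->
        forall X Y Z : slot, X <> Y -> Y <> Z -> X <> Z ->
          limit1_in (DeltaQ_alpha dA dB dC rho tau theta omega X Y Z) (fun a => a <> 1)
            (DeltaQ dA dB dC rho tau theta omega) 1)
    /\
    limit1_in (DeltaQ_alpha dA dB dC rho (margAC dA dB dC rho) (margBC dA dB dC rho)
                 (margC dA dB dC rho) sTau sOmega sTheta) (fun a => a <> 1)
      (CMI dA dB dC rho) 1.
Proof.
  intros dA dB dC rho Hrho. split.
  - intros. apply DeltaQ_alpha_limit; auto.
  - destruct (marginal_states dA dB dC rho Hrho) as [Htau [Htheta Homega]].
    destruct (marginal_supports dA dB dC rho (proj1 Hrho)) as [Stau [Stheta Somega]].
    rewrite CMI_eq_DeltaQ. apply DeltaQ_alpha_limit; auto; discriminate.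
Qed.
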